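(* Let $p$ be a prime, $n>1$, $\alpha_0,\dots,\alpha_{n-1}\in\mathbb{L}_p$, and let $$A=\begin{pmatrix}0&1&0&\cdots&0\\0&0&1&\ddots&0\\\vdots&&\ddots&\ddots&0\\0&0&\cdots&0&1\\\alpha_0&\alpha_1&\cdots&\alpha_{n-2}&\alpha_{n-1}\end{pmatrix}\in\mathbb{L}_p^{n\times n}$$ (so that $A^T$ is the companion matrix of $-\alpha_0-\alpha_1t-\dots-\alpha_{n-1}t^{n-1}+t^n$). Let $\mathcal{F}$ be the linear cellular automaton over $(\mathbb{Z}/p\mathbb{Z})^n$ with associated matrix $A$. Then the following are equivalent: $\mathcal{F}$ is positively expansive; $A$ is expansive; $A^T$ is expansive; the polynomial $\alpha_0+\alpha_1t+\dots+\alpha_{n-1}t^{n-1}+t^n$ is expansive.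
   Context: $\mathbb{L}_p=\mathbb{Z}/p\mathbb{Z}[X,X^{-1}]$. The linear cellular automaton over $(\mathbb{Z}/p\mathbb{Z})^n$ with associated matrix $\sum_{j=-r}^rA_jX^{-j}$ ($A_j\in(\mathbb{Z}/p\mathbb{Z})^{n\times n}$) is the map $\mathcal{F}$ with $\mathcal{F}(c)_i=\sum_{j=-r}^rA_jc_{i+j}$ on $((\mathbb{Z}/p\mathbb{Z})^n)^{\mathbb{Z}}$, with metric $d(c,c')=2^{-\min\{|j|:c_j\neq c'_j\}}$ ($d(c,c)=0$); it is positively expansive if there is $\varepsilon>0$ such that for all $c\neq c'$ some $\ell\in\mathbb{N}$ gives $d(\mathcal{F}^\ell(c),\mathcal{F}^\ell(c'))\geq\varepsilon$. For nonzero $\alpha\in\mathbb{L}_p$, $\deg^+(\alpha)$ (resp. $\deg^-(\alpha)$) is the largest (resp. smallest) exponent with nonzero coefficient; $\deg^+(0)=-\infty$, $\deg^-(0)=+\infty$. A monic polynomial $\beta_0+\beta_1t+\dots+\beta_{n-1}t^{n-1}+t^n\in\mathbb{L}_p[t]$ is expansive if $\beta_0\neq0$, $\deg^+(\beta_0)>0$, $\deg^+(\beta_0)>\deg^+(\beta_i)$ for all $1\le i\le n-1$, $\deg^-(\beta_0)<0$ and $\deg^-(\beta_0)<\deg^-(\beta_i)$ for all $1\le i\le n-1$. A matrix $M\in\mathbb{L}_p^{n\times n}$ is expansive if $\det(tI_n-M)$ is expansive. *)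

From HB Require Import structures.
From mathcomp Require Import all_boot all_order all_algebra fraction.
From mathcomp Require Import boolp Rstruct.
Set Implicit Arguments. Unset Strict Implicit. Unset Printing Implicit Defensive.
Import Order.TTheory GRing.Theory Num.Theory.
Local Open Scope ring_scope.

(* The ring L_p = (Z/pZ)[X, X^-1] is realised inside the field of rational
   functions K p = Frac((Z/pZ)[X]): an element is a Laurent polynomial iff it
   is of the form q / X^k with q a polynomial. *)
Notation K p := {fraction {poly 'F_p}}.

Definition lfrac (p : nat) (k : nat) (q : {poly 'F_p}) : K p :=
  FracField.tofrac q / FracField.tofrac ('X^k).

Definition is_laurent (p : nat) (x : K p) : Prop :=
  exists (k : nat) (q : {poly 'F_p}), x = lfrac k q.

(* a chosen representation x = q / X^k (default (0,0) if x is not Laurent) *)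
Definition lrep (p : nat) (x : K p) : nat * {poly 'F_p} :=
  match pselect (exists r : nat * {poly 'F_p}, x = lfrac r.1 r.2) with
  | left h => projT1 (cid h)
  | right _ => (0%N, 0)
  end.

Definition lcoef (p : nat) (x : K p) (m : int) : 'F_p :=
  let r := lrep x in
  if (0 <= m + (r.1)%:Z)%R then (r.2)`_(absz (m + (r.1)%:Z)) else 0.

Definition degp (p : nat) (x : K p) : int :=
  let r := lrep x in ((size r.2).-1)%:Z - (r.1)%:Z.
Definition degm (p : nat) (x : K p) : int :=
  let r := lrep x in (find (fun a => a != 0) (r.2 : seq 'F_p))%:Z - (r.1)%:Z.

(* expansive monic polynomial beta_0 + ... + beta_{n-1} t^{n-1} + t^n in L_p[t]
   (conventions deg^+ 0 = -oo, deg^- 0 = +oo written out since beta_0 <> 0) *)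
Definition expansive_poly (p : nat) (P : {poly K p}) : Prop :=
  [/\ P \is monic, (forall i, is_laurent P`_i),
      P`_0 != 0,
      (0 < degp P`_0)%R /\ (forall i, (1 <= i < (size P).-1)%N ->
                              P`_i = 0 \/ (degp P`_i < degp P`_0)%R)
    & (degm P`_0 < 0)%R /\ (forall i, (1 <= i < (size P).-1)%N ->
                              P`_i = 0 \/ (degm P`_0 < degm P`_i)%R)].

Definition expansive_mx (p n : nat) (M : 'M[K p]_n) : Prop :=
  expansive_poly (char_poly M).

Definition config (p n : nat) := int -> 'cV['F_p]_n.

Definition coefmx (p n : nat) (M : 'M[K p]_n) (m : int) : 'M['F_p]_n :=
  \matrix_(a, b) lcoef (M a b) m.

(* a radius r such that all coefficients of entries of M vanish outside [-r, r] *)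
Definition radius (p n : nat) (M : 'M[K p]_n) : nat :=
  \max_(a < n) \max_(b < n) maxn (lrep (M a b)).1 (size (lrep (M a b)).2).

(* The LCA with associated matrix M = sum_{j=-r}^{r} A_j X^{-j}:
   F(c)_i = sum_{j=-r}^{r} A_j c_{i+j}, with A_j the coefficient of X^{-j}. *)
Definition lca (p n : nat) (M : 'M[K p]_n) (c : config p n) : config p n :=
  fun i => let r := radius M in
    \sum_(k < (r + r).+1)
       coefmx M (- (k%:Z - r%:Z)) *m c (i + (k%:Z - r%:Z)).

Definition diffat (p n : nat) (c c' : config p n) : pred nat :=
  fun k => `[< exists j : int, absz j = k /\ c j <> c' j >].

Definition cdist (p n : nat) (c c' : config p n) : Rdefinitions.R :=
  match pselect (exists k, diffat c c' k) with
  | left h => (2%:R ^- ex_minn h)%R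
  | right _ => 0%R
  end.

Definition pos_expansive (p n : nat) (F : config p n -> config p n) : Prop :=
  exists eps : Rdefinitions.R, (0 < eps)%R /\
    forall c c' : config p n, c <> c' ->
      exists l : nat, (eps <= cdist (iter l F c) (iter l F c'))%R.

Definition matA (p n : nat) (alpha : 'I_n -> K p) : 'M[K p]_n :=
  \matrix_(i, j) if (i.+1 < n)%N then ((j : nat) == i.+1)%:R else alpha j.

From mathcomp Require Import all_boot all_order all_algebra fraction.
From mathcomp Require Import boolp Rstruct.
From mathcomp Require Import zify ring.
Set Implicit Arguments. Unset Strict Implicit. Unset Printing Implicit Defensive.
Import Order.TTheory GRing.Theory Num.Theory.
Local Open Scope ring_scope.

(* Let u_l(y) be the first coordinate of F^l(c) at cell y.  Since A is a
   companion matrix, u satisfies u_(l+n) = sum_b alpha_b * u_(l+b), a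
   convolution in y; in terms of the coefficients beta_i of
   P = det(tI - A) = t^n - sum_i alpha_i t^i this reads sum_i beta_i * u_(l+i) = 0,
   and conversely every solution of this recurrence is such an orbit.
   If P is expansive, the lowest and the highest exponent of beta_0 are not
   reached by any other beta_i, so a solution that vanishes on the window
   [-r, r] at all times vanishes everywhere, by induction to the right and to
   the left: F is positively expansive with constant 2^-r.  Otherwise some
   beta_i with i >= 1 reaches as far down (or up) as beta_0; solving the
   recurrence for a suitable pivot term then builds a nonzero solution supported
   on a half-line, and its translates are orbits that differ from the zero orbit
   but agree with it on arbitrarily large windows forever.  Finally A^T has the
   same characteristic polynomial, and t^n + sum_i alpha_i t^i has the
   coefficients of P up to sign. *)

Section Convolution.
Variables (R : pzRingType) (r : nat).
Implicit Types (a u v : int -> R) (x y : int).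

Definition conv a u x : R :=
  \sum_(k < (r + r).+1) a (- (k%:Z - r%:Z)) * u (x + (k%:Z - r%:Z)).

Lemma eq_conv a u v x :
  (forall t, (absz t <= r)%N -> a t != 0 -> u (x - t) = v (x - t)) ->
  conv a u x = conv a v x.
Proof.
move=> uv; apply: eq_bigr => k _.
have [->|a_nz] := eqVneq (a (- (k%:Z - r%:Z))) 0; first by rewrite !mul0r.
by have := uv _ _ a_nz; rewrite opprK => ->; [|have := ltn_ord k; lia].
Qed.

Lemma eq_conv_l a a' u x : a =1 a' -> conv a u x = conv a' u x.
Proof. by move=> aa'; apply: eq_bigr => k _; rewrite aa'. Qed.

Lemma conv0l u x : conv (fun=> 0) u x = 0.
Proof. by rewrite /conv big1 // => k _; rewrite mul0r. Qed.

Lemma conv0r a x : conv a (fun=> 0) x = 0.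
Proof. by rewrite /conv big1 // => k _; rewrite mulr0. Qed.

Lemma convNl a u x : conv (fun t => - a t) u x = - conv a u x.
Proof. by rewrite -sumrN; apply: eq_bigr => k _; rewrite mulNr. Qed.

Lemma convBr a u v x : conv a (fun y => u y - v y) x = conv a u x - conv a v x.
Proof. by rewrite -sumrB; apply: eq_bigr => k _; rewrite mulrBr. Qed.

Lemma conv_shift a u s x : conv a (fun y => u (y - s)) x = conv a u (x - s).
Proof. by apply: eq_bigr => k _; congr (_ * u _); ring. Qed.

Lemma conv_refl a u x :
  conv (fun t => a (- t)) (fun y => u (- y)) x = conv a u (- x).
Proof.
rewrite /conv (reindex_inj rev_ord_inj) /=; apply: eq_bigr => k _.
have -> : (r + r - k)%N%:Z - r%:Z = - (k%:Z - r%:Z) by have := ltn_ord k; lia.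
by rewrite opprK; congr (_ * u _); ring.
Qed.

Lemma conv_delta u x : conv (fun t => (t == 0)%:R) u x = u x.
Proof.
rewrite /conv (big_only1 (Ordinal (leq_addr r r : r < (r + r).+1)%N)) //=.
  by rewrite subrr oppr0 eqxx mul1r addr0.
move=> k /negP k_r _; rewrite (_ : _ == 0 = false) ?mul0r //.
by apply/negP => /eqP k_r'; apply: k_r; rewrite -val_eqE /=; lia.
Qed.

Lemma conv_patch a u x y : (absz (x - y) <= r)%N ->
  conv a u x = conv a (fun z => if z == y then 0 else u z) x + a (x - y) * u y.
Proof.
move=> xy; have k0_lt : (absz (r%:Z - (x - y))%R < (r + r).+1)%N by lia.
rewrite /conv (bigD1 (Ordinal k0_lt)) // [in RHS](bigD1 (Ordinal k0_lt)) //= ifT; last by apply/eqP; lia.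
rewrite mulr0 add0r addrC; congr (_ + _); last by congr (a _ * u _); lia.
apply: eq_bigr => k /negP k_k0; rewrite ifF //; apply/negP => /eqP hk.
by apply: k_k0; rewrite -val_eqE /=; lia.
Qed.

End Convolution.
Section Recurrence.
Variables (R : pzRingType) (n r : nat) (beta : nat -> int -> R).
Implicit Types (u v : nat -> int -> R) (l j : nat) (x y : int).

Definition rec_lhs u l x : R := \sum_(i < n.+1) conv r (beta i) (u (l + i)%N) x.

Definition solves u := forall l x, rec_lhs u l x = 0.

Definition supported := forall i t, (i <= n)%N -> beta i t != 0 -> (absz t <= r)%N.

Definition patch u j y : nat -> int -> R :=
  fun j' y' => if (j' == j) && (y' == y) then 0 else u j' y'.

Lemma eq_rec_lhs u v l x :
  (forall i t, (i <= n)%N -> (absz t <= r)%N -> beta i t != 0 ->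
     u (l + i)%N (x - t) = v (l + i)%N (x - t)) ->
  rec_lhs u l x = rec_lhs v l x.
Proof.
by move=> uv; apply: eq_bigr => i _; apply: eq_conv => t; apply: uv; rewrite -ltnS.
Qed.

Lemma rec_lhs0 l x : rec_lhs (fun _ _ => 0) l x = 0.
Proof. by rewrite /rec_lhs big1 // => i _; rewrite conv0r. Qed.

Lemma rec_lhs_patch u l i0 x y : (i0 <= n)%N -> (absz (x - y) <= r)%N ->
  rec_lhs u l x = rec_lhs (patch u (l + i0) y) l x + beta i0 (x - y) * u (l + i0)%N y.
Proof.
rewrite -ltnS => i0_le xy; rewrite /rec_lhs (bigD1 (Ordinal i0_le)) //=.
rewrite [in RHS](bigD1 (Ordinal i0_le)) //= (conv_patch _ _ xy) -!addrA.
congr (_ + _); first by apply: eq_conv => t _ _; rewrite /patch eqxx.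
rewrite addrC; congr (_ + _); apply: eq_bigr => i i_i0; apply: eq_conv => t _ _.
by move: i_i0; rewrite /patch eqn_add2l -val_eqE => /negbTE ->.
Qed.

Lemma solvesB u v : solves u -> solves v -> solves (fun l y => u l y - v l y).
Proof.
move=> su sv l x; rewrite /rec_lhs; under eq_bigr => i _ do rewrite convBr.
by rewrite sumrB -/(rec_lhs u l x) -/(rec_lhs v l x) su sv subrr.
Qed.

Lemma solves_shift u s : solves u -> solves (fun l y => u l (y - s)).
Proof.
by move=> su l x; rewrite -(su l (x - s)); apply: eq_bigr => i _; rewrite conv_shift.
Qed.

End Recurrence.

Lemma solves_refl (R : pzRingType) n r beta (u : nat -> int -> R) :
  solves n r beta u -> solves n r (fun i t => beta i (- t)) (fun l y => u l (- y)).
Proof.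
by move=> su l x; rewrite -(su l (- x)); apply: eq_bigr => i _; rewrite conv_refl.
Qed.

Section Propagation.
Variables (R : idomainType) (n r : nat).
Implicit Types (beta : nat -> int -> R) (u : nat -> int -> R).

(* The equation at [y + e] expresses [u l y] through values left of [y]. *)
Lemma solves_vanish_right beta u m e : supported n r beta -> (r <= m)%N ->
  beta 0 e != 0 ->
  (forall i t, (i <= n)%N -> beta i t != 0 -> (i == 0%N) && (t == e) || (e < t)) ->
  solves n r beta u -> (forall l y, (absz y <= m)%N -> u l y = 0) ->
  forall l y, - (m%:Z) <= y -> u l y = 0.
Proof.
move=> beta_supp r_m b0e e_low su u_win.
have e_r := beta_supp _ _ (leq0n n) b0e.
suff u0 k l y : - (m%:Z) <= y <= m%:Z + k%:Z -> u l y = 0.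
  by move=> l y hy; apply: (u0 (absz y)); lia.
elim: k l y => [|k IHk] l y hy; first by apply: u_win; lia.
have [y_le|y_gt] := boolP (y <= m%:Z + k%:Z); first by apply: IHk; lia.
have := su l (y + e); rewrite (@rec_lhs_patch _ _ _ _ u l 0 (y + e) y (leq0n n)) ?addn0; last by lia.
rewrite (_ : y + e - y = e); last by ring.
rewrite (@eq_rec_lhs _ _ _ _ _ (fun _ _ => 0)) ?rec_lhs0 ?add0r.
  by move/eqP; rewrite mulf_eq0 (negbTE b0e) => /eqP.
move=> i t i_n t_r bit; rewrite /patch.
case/orP: (e_low _ _ i_n bit) => [/andP[/eqP-> /eqP->]|e_t].
  by rewrite addn0 eqxx (_ : y + e - e = y) ?eqxx //; ring.
case: ifP => // _; apply: IHk; lia.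
Qed.

Lemma solves_vanish_left beta u m d : supported n r beta -> (r <= m)%N ->
  beta 0 d != 0 ->
  (forall i t, (i <= n)%N -> beta i t != 0 -> (i == 0%N) && (t == d) || (t < d)) ->
  solves n r beta u -> (forall l y, (absz y <= m)%N -> u l y = 0) ->
  forall l y, y <= m%:Z -> u l y = 0.
Proof.
move=> beta_supp r_m b0d d_high su u_win l y y_m; rewrite -[y]opprK.
apply: (@solves_vanish_right _ _ m (- d) _ _ _ _ (solves_refl su)) => //.
- by move=> i t i_n /(beta_supp _ _ i_n); lia.
- by rewrite opprK.
- move=> i t i_n /(d_high _ _ i_n); rewrite -eqr_oppLR; lia.
- by move=> l' y' y'_m; apply: u_win; lia.
- lia.
Qed.

Lemma solves_eq0 beta u m e d : supported n r beta -> (r <= m)%N ->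
  beta 0 e != 0 -> beta 0 d != 0 ->
  (forall i t, (i <= n)%N -> beta i t != 0 ->
     [|| (i == 0%N) && (t == e) | e < t] && [|| (i == 0%N) && (t == d) | t < d]) ->
  solves n r beta u -> (forall l y, (absz y <= m)%N -> u l y = 0) ->
  forall l y, u l y = 0.
Proof.
move=> beta_supp r_m b0e b0d ed su u_win l y.
have [y_m|y_m] := lerP (- (m%:Z)) y.
  apply: (solves_vanish_right beta_supp r_m b0e) => // i t i_n /(ed _ _ i_n) /andP[] //.
apply: (solves_vanish_left beta_supp r_m b0d) => //; last by lia.
by move=> i t i_n /(ed _ _ i_n) /andP[].
Qed.

End Propagation.

Lemma exists_pivot (R : pzRingType) n r (beta : nat -> int -> R) i1 t0 :
  supported n r beta -> (0 < i1 <= n)%N -> beta i1 t0 != 0 ->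
  (forall t, t < t0 -> beta 0 t = 0) ->
  exists istar mu, [/\ (0 < istar <= n)%N, beta istar mu != 0 &
    forall i t, (i <= n)%N -> beta i t != 0 -> (mu < t) || (t == mu) && (i <= istar)%N].
Proof.
move=> beta_supp i1_n bi1 b0_before.
have i1_le : (i1 <= n)%N by lia.
pose P s := [exists i : 'I_n.+1, beta i (s%:Z - r%:Z) != 0].
have P_t i t : (i <= n)%N -> beta i t != 0 -> P (absz (t + r%:Z)).
  move=> i_n bit; have := beta_supp _ _ i_n bit; rewrite -ltnS in i_n.
  move=> t_r; apply/existsP; exists (Ordinal i_n).
  by rewrite (_ : _ - _ = t) //; lia.
have [s0 /existsP[i0 bi0] s0_min] := ex_minnP (ex_intro P _ (P_t _ _ i1_le bi1)).
set mu := s0%:Z - r%:Z in bi0.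
have mu_le i t : (i <= n)%N -> beta i t != 0 -> mu <= t.
  by move=> i_n bit; have := s0_min _ (P_t _ _ i_n bit); have := beta_supp _ _ i_n bit; lia.
pose Q i := (i <= n)%N && (beta i mu != 0).
have Q_i0 : Q i0 by rewrite /Q bi0 -ltnS ltn_ord.
have Q_le i : Q i -> (i <= n)%N by case/andP.
have [istar /andP[istar_n b_istar] istar_max] := ex_maxnP (ex_intro Q _ Q_i0) Q_le.
have pivot_min i t : (i <= n)%N -> beta i t != 0 -> (mu < t) || (t == mu) && (i <= istar)%N.
  move=> i_n bit; have := mu_le _ _ i_n bit; rewrite le_eqVlt => /orP[/eqP mu_t|->] //.
  by rewrite -mu_t eqxx istar_max ?orbT // /Q i_n mu_t bit.
exists istar, mu; split => //; rewrite istar_n andbT lt0n; apply/eqP => istar0.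
have := pivot_min _ _ i1_le bi1; rewrite istar0 leqn0.
have [mu_t0|] := ltP mu t0; first by move: b_istar; rewrite istar0 b0_before ?eqxx.
by lia.
Qed.

Lemma ltn_add_mul_lex (N j j' Y Y' : nat) :
  (j' < j + N)%N -> (Y' < Y)%N -> (j' + N * Y' < j + N * Y)%N.
Proof.
move=> jj YY; apply: (@leq_trans (j + N * Y'.+1)); first by rewrite mulnS; lia.
by rewrite leq_add2l leq_mul2l YY orbT.
Qed.

Section PivotSolution.
Variables (F : fieldType) (n r : nat) (beta : nat -> int -> F) (istar : nat) (mu : int).
Hypotheses (beta_supp : supported n r beta) (istar_gt0 : (0 < istar)%N)
  (istar_le : (istar <= n)%N) (pivot_nz : beta istar mu != 0)
  (pivot_min : forall i t, (i <= n)%N -> beta i t != 0 ->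
     (mu < t) || (t == mu) && (i <= istar)%N).

(* [u j y] is obtained by solving the equation at [(j - istar, y + mu)] for its
   pivot term; all other terms sit at a smaller position (and a time at most
   [j + n]) or at the same position and an earlier time, so [weight] decreases
   and [approx f] stabilises once the fuel [f] exceeds it. *)
Let weight (j : nat) (y : int) : nat := (j + n.+1 * absz y)%N.

Fixpoint approx (f j : nat) (y : int) : F :=
  if f is f.+1 then
    if y < 0 then 0
    else if (j < istar)%N then ((j == 0%N) && (y == 0))%:R
    else - (beta istar mu)^-1 * rec_lhs n r beta (patch (approx f) j y) (j - istar) (y + mu)
  else 0.

Lemma approx_neg f j y : y < 0 -> approx f j y = 0.
Proof. by case: f => //= f ->. Qed.

Lemma eq_rec_lhs_pivot (v w : nat -> int -> F) j y : (istar <= j)%N -> 0 <= y ->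
  (forall j' y', (y' < 0) || (weight j' y' < weight j y)%N -> v j' y' = w j' y') ->
  rec_lhs n r beta (patch v j y) (j - istar) (y + mu) =
  rec_lhs n r beta (patch w j y) (j - istar) (y + mu).
Proof.
move=> istar_j y_ge vw; apply: eq_rec_lhs => i t i_n _ bit; rewrite /patch.
case: ifP => // /negbT not_pivot; apply: vw.
have [y'_neg|y'_ge] := ltP (y + mu - t) 0; first by [].
rewrite /weight; case/orP: (pivot_min i_n bit) => [mu_t|/andP[/eqP t_mu i_istar]].
  by apply: ltn_add_mul_lex; lia.
move: not_pivot; rewrite t_mu (_ : y + mu - mu = y) ?eqxx ?andbT; last by ring.
by move=> ?; apply/orP; right; lia.
Qed.

Lemma approx_stable f g j y : (weight j y < f)%N -> (weight j y < g)%N ->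
  approx f j y = approx g j y.
Proof.
elim: f g j y => [|f IHf] [|g] j y //= wf wg; case: ifP => // /negbT y_ge.
case: ifP => // /negbT j_ge; congr (_ * _); apply: eq_rec_lhs_pivot; try lia.
by move=> j' y' /orP[y'_neg|w_lt]; [rewrite !approx_neg | apply: IHf; lia].
Qed.

Definition pivot_solution j y := approx (weight j y).+1 j y.

Lemma pivot_solution_neg j y : y < 0 -> pivot_solution j y = 0.
Proof. exact: approx_neg. Qed.

Lemma pivot_solution00 : pivot_solution 0 0 = 1.
Proof. by rewrite /pivot_solution /= istar_gt0. Qed.

Lemma pivot_solutionE j y : (istar <= j)%N -> 0 <= y ->
  pivot_solution j y =
  - (beta istar mu)^-1 * rec_lhs n r beta (patch pivot_solution j y) (j - istar) (y + mu).
Proof.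
move=> istar_j y_ge; rewrite {1}/pivot_solution /= ltNge y_ge ltnNge istar_j /=.
congr (_ * _); apply: eq_rec_lhs_pivot => // j' y' /orP[y'_neg|w_lt].
  by rewrite /pivot_solution !approx_neg.
by apply: approx_stable; lia.
Qed.

Lemma pivot_solution_solves : solves n r beta pivot_solution.
Proof.
move=> l x; have [x_lt|x_ge] := ltP (x - mu) 0.
  rewrite (@eq_rec_lhs _ _ _ _ _ (fun _ _ => 0)) ?rec_lhs0 // => i t i_n _ bit.
  by rewrite pivot_solution_neg //; have := pivot_min i_n bit; lia.
have mu_r := beta_supp istar_le pivot_nz.
rewrite (@rec_lhs_patch _ _ _ _ _ _ istar x (x - mu)) //; last by lia.
rewrite (pivot_solutionE (leq_addl _ _) x_ge) addnK subrK.
rewrite (_ : x - (x - mu) = mu); last by ring.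
by field.
Qed.

End PivotSolution.

Lemma exists_solution_nonneg (F : fieldType) n r (beta : nat -> int -> F) i1 t0 :
  supported n r beta -> (0 < i1 <= n)%N -> beta i1 t0 != 0 ->
  (forall t, t < t0 -> beta 0 t = 0) ->
  exists u, [/\ u 0%N 0 = 1, (forall l y, y < 0 -> u l y = 0) & solves n r beta u].
Proof.
move=> beta_supp i1_n bi1 b0_before.
have [istar [mu [/andP[istar_gt0 istar_le] b_nz pivot_min]]] := exists_pivot beta_supp i1_n bi1 b0_before.
exists (pivot_solution n r beta istar mu); split.
- exact: pivot_solution00.
- by move=> l y; apply: pivot_solution_neg.
- exact: pivot_solution_solves.
Qed.

Section ShiftedCoefficients.
Variable R : nzRingType.
Implicit Types (q : {poly R}) (k : nat) (t : int).

Definition pcoef k q t : R := if 0 <= t + k%:Z then q`_(absz (t + k%:Z)) else 0.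

Lemma pcoef_gt k q t : (size q).-1%:Z - k%:Z < t -> pcoef k q t = 0.
Proof.
rewrite /pcoef -subn1 => deg_t; case: ifP => // tk.
(* [set] identifies the two (convertible) instances of [size q] for [lia] *)
by rewrite nth_default //; move: deg_t; set s := size _; lia.
Qed.

Lemma pcoef_window k q t : pcoef k q t != 0 -> (absz t <= maxn k (size q))%N.
Proof.
rewrite /pcoef; case: ifP => [tk|]; last by rewrite eqxx.
have [big|small] := leqP (size q) (absz (t + k%:Z)%R); first by rewrite nth_default ?eqxx.
by move=> _; move: small; set s := size _; lia.
Qed.

Lemma pcoef_size k q : q != 0 -> pcoef k q ((size q).-1%:Z - k%:Z) = lead_coef q.
Proof.
rewrite -size_poly_gt0 /pcoef lead_coefE => q_gt0; rewrite ifT; last by lia.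
by congr (_`_ _); lia.
Qed.

Definition low_index q := find (fun a => a != 0) q.

Lemma pcoef_low_index k q : q != 0 -> pcoef k q ((low_index q)%:Z - k%:Z) != 0.
Proof.
move=> q_nz; rewrite /pcoef ifT; last by lia.
rewrite (_ : absz _ = low_index q); last by lia.
have q_has : has (fun a => a != 0) q.
  apply/hasP; exists (lead_coef q); last by rewrite lead_coef_eq0.
  by rewrite lead_coefE mem_nth // prednK // size_poly_gt0.
exact: nth_find q_has.
Qed.

Lemma pcoef_lt k q t : t < (low_index q)%:Z - k%:Z -> pcoef k q t = 0.
Proof.
rewrite /pcoef => t_low; case: ifP => // tk.
have := @before_find _ 0 (fun a => a != 0) q (absz (t + k%:Z)%R).
by move=> /(_ _) /negbFE /eqP; apply; move: t_low; rewrite /low_index; set f := find _ _; lia.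
Qed.

End ShiftedCoefficients.

Section LaurentCoefficients.
Variable p : nat.
Implicit Types (x : K p) (q : {poly 'F_p}) (k : nat) (t : int).

Lemma lcoefE x t : lcoef x t = pcoef (lrep x).1 (lrep x).2 t.
Proof. by []. Qed.

Lemma lrepK x : is_laurent x -> lfrac (lrep x).1 (lrep x).2 = x.
Proof.
move=> [k [q ->]]; rewrite /lrep; case: pselect => [h|[]]; last by exists (k, q).
by case: (cid h).
Qed.

Lemma lfrac_eq k q k' q' : lfrac k q = lfrac k' q' -> q * 'X^k' = q' * 'X^k.
Proof.
have tfX_neq0 j : FracField.tofrac ('X^j : {poly 'F_p}) != 0.
  by rewrite tofrac_eq0 monic_neq0 ?monicXn.
rewrite /lfrac => /eqP; rewrite eqr_div ?tfX_neq0 // -!tofracM tofrac_eq.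
exact: eqP.
Qed.

Lemma pcoef_eq k q k' q' t : q * 'X^k' = q' * 'X^k -> pcoef k q t = pcoef k' q' t.
Proof.
move=> /(congr1 (fun s : {poly 'F_p} => s`_(absz (t + k%:Z + k'%:Z)))).
rewrite !coefMXn /pcoef => E.
have [t_neg|t_ge] := ltP (t + k%:Z + k'%:Z) 0.
  by rewrite !ifF //; apply/negbTE/negP => ?; lia.
have e1 : (absz (t + k%:Z + k'%:Z)%R < k')%N = ~~ (0 <= t + k%:Z) by lia.
have e2 : (absz (t + k%:Z + k'%:Z)%R < k)%N = ~~ (0 <= t + k'%:Z) by lia.
have i1 : 0 <= t + k%:Z -> (absz (t + k%:Z + k'%:Z)%R - k')%N = absz (t + k%:Z)%R.
  by lia.
have i2 : 0 <= t + k'%:Z -> (absz (t + k%:Z + k'%:Z)%R - k)%N = absz (t + k'%:Z)%R.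
  by lia.
move: E; rewrite e1 e2.
have [tk|tk] := lerP 0 (t + k%:Z); have [tk'|tk'] := lerP 0 (t + k'%:Z) => //=.
- by rewrite i1 ?i2.
- by rewrite i1.
- by rewrite i2.
Qed.

Lemma lcoef_lfrac k q t : lcoef (lfrac k q) t = pcoef k q t.
Proof.
by rewrite lcoefE; apply: pcoef_eq; apply: lfrac_eq; rewrite lrepK //; exists k, q.
Qed.

Lemma lfrac0 k : lfrac k 0 = 0 :> K p.
Proof. by rewrite /lfrac rmorph0 mul0r. Qed.

Lemma lfrac1 : lfrac 0 1 = 1 :> K p.
Proof. by rewrite /lfrac expr0 rmorph1 divr1. Qed.

Lemma lfracN k q : lfrac k (- q) = - lfrac k q :> K p.
Proof. by rewrite /lfrac rmorphN mulNr. Qed.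

Lemma laurent0 : is_laurent (0 : K p).
Proof. by exists 0%N, 0; rewrite lfrac0. Qed.

Lemma laurent1 : is_laurent (1 : K p).
Proof. by exists 0%N, 1; rewrite lfrac1. Qed.

Lemma laurentN x : is_laurent x -> is_laurent (- x).
Proof. by move=> [k [q ->]]; exists k, (- q); rewrite lfracN. Qed.

Lemma lcoef0 t : lcoef (0 : K p) t = 0.
Proof. by rewrite -(lfrac0 0) lcoef_lfrac /pcoef coef0; case: ifP. Qed.

Lemma lcoef1 t : lcoef (1 : K p) t = (t == 0)%:R.
Proof.
rewrite -lfrac1 lcoef_lfrac /pcoef coef1 addr0.
have [->|t_nz] := eqVneq t 0 => //; rewrite mulr0n; case: ifP => // _.
by rewrite (_ : (absz t == 0%N) = false) //; lia.
Qed.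

Lemma lcoefN x t : is_laurent x -> lcoef (- x) t = - lcoef x t.
Proof.
move=> [k [q ->]]; rewrite -lfracN !lcoef_lfrac /pcoef coefN.
by case: ifP; rewrite ?oppr0.
Qed.

Lemma lcoef_window x t : lcoef x t != 0 ->
  (absz t <= maxn (lrep x).1 (size (lrep x).2))%N.
Proof. exact: pcoef_window. Qed.

Lemma lrep_neq0 x : is_laurent x -> x != 0 -> (lrep x).2 != 0.
Proof. by move=> lx; apply: contraNneq => q0; rewrite -(lrepK lx) q0 lfrac0. Qed.

Lemma lcoef_degp x : is_laurent x -> x != 0 -> lcoef x (degp x) != 0.
Proof.
by move=> lx /(lrep_neq0 lx) q_nz; rewrite lcoefE pcoef_size // lead_coef_eq0.
Qed.

Lemma lcoef_gt_degp x t : degp x < t -> lcoef x t = 0.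
Proof. exact: pcoef_gt. Qed.

Lemma lcoef_degm x : is_laurent x -> x != 0 -> lcoef x (degm x) != 0.
Proof. by move=> lx /(lrep_neq0 lx); apply: pcoef_low_index. Qed.

Lemma lcoef_lt_degm x t : t < degm x -> lcoef x t = 0.
Proof. exact: pcoef_lt. Qed.

Lemma degp_ge x t : lcoef x t != 0 -> t <= degp x.
Proof. by apply: contraNT; rewrite -ltNge => /lcoef_gt_degp ->. Qed.

Lemma degm_le x t : lcoef x t != 0 -> degm x <= t.
Proof. by apply: contraNT; rewrite -ltNge => /lcoef_lt_degm ->. Qed.

Lemma degpN x : is_laurent x -> degp (- x) = degp x.
Proof.
move=> lx; have [->|x_nz] := eqVneq x 0; first by rewrite oppr0.
have nx_nz : - x != 0 by rewrite oppr_eq0.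
apply/eqP; rewrite eq_le; apply/andP; split; apply: degp_ge.
  by have := lcoef_degp (laurentN lx) nx_nz; rewrite lcoefN // oppr_eq0.
by rewrite (lcoefN _ lx) oppr_eq0 (lcoef_degp lx x_nz).
Qed.

Lemma degmN x : is_laurent x -> degm (- x) = degm x.
Proof.
move=> lx; have [->|x_nz] := eqVneq x 0; first by rewrite oppr0.
have nx_nz : - x != 0 by rewrite oppr_eq0.
apply/eqP; rewrite eq_le; apply/andP; split; apply: degm_le.
  by rewrite (lcoefN _ lx) oppr_eq0 (lcoef_degm lx x_nz).
by have := lcoef_degm (laurentN lx) nx_nz; rewrite lcoefN // oppr_eq0.
Qed.

End LaurentCoefficients.

Section ExpansivePoly.
Variable p : nat.
Implicit Types P Q : {poly K p}.

(* Since [P`_d = 1], the case [i = d] encodes [deg^- P`_0 < 0 < deg^+ P`_0]. *)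
Lemma expansive_polyP P : P \is monic -> (forall i, is_laurent P`_i) -> (1 < size P)%N ->
  expansive_poly P <->
  P`_0 != 0 /\ forall i t, (0 < i <= (size P).-1)%N -> lcoef P`_i t != 0 ->
    degm P`_0 < t < degp P`_0.
Proof.
move=> P_monic P_laurent P_size; set d := (size P).-1.
have Pd : P`_d = 1 by move/monicP: P_monic; rewrite lead_coefE.
split.
  case=> _ _ P0 [deg_pos deg_gt] [deg_neg deg_lt]; split=> // i t /andP[i_gt i_le] Pit.
  have [i_d|i_d] := eqVneq i d.
    move: Pit; rewrite i_d Pd lcoef1; have [-> _|] := eqVneq t 0; first by rewrite deg_pos deg_neg.
    by rewrite mulr0n eqxx.
  have i_lt : (1 <= i < d)%N by lia.
  have Pi_nz : P`_i != 0 by apply: contraNneq Pit => ->; rewrite lcoef0.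
  case: (deg_gt i i_lt) => [/eqP|Pi_gt]; first by rewrite (negbTE Pi_nz).
  case: (deg_lt i i_lt) => [/eqP|Pi_lt]; first by rewrite (negbTE Pi_nz).
  by rewrite (lt_le_trans Pi_lt (degm_le Pit)) (le_lt_trans (degp_ge Pit) Pi_gt).
case=> P0 inside; have d_gt0 : (0 < d)%N by lia.
have /andP[deg_neg deg_pos] : degm P`_0 < 0 < degp P`_0.
  by apply: (inside d); rewrite ?d_gt0 ?leqnn // Pd lcoef1 eqxx oner_neq0.
split=> //.
  split=> // i /andP[i_gt i_lt]; have [->|Pi_nz] := eqVneq P`_i 0; [by left | right].
  have /andP[] // : degm P`_0 < degp P`_i < degp P`_0.
  by apply: inside; [apply/andP; split; [exact: i_gt | exact: ltnW i_lt] | exact: lcoef_degp].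
split=> // i /andP[i_gt i_lt]; have [->|Pi_nz] := eqVneq P`_i 0; [by left | right].
have /andP[] // : degm P`_0 < degm P`_i < degp P`_0.
by apply: inside; [apply/andP; split; [exact: i_gt | exact: ltnW i_lt] | exact: lcoef_degm].
Qed.

Lemma expansive_poly_sign P Q : P \is monic -> Q \is monic -> (1 < size P)%N ->
  size P = size Q -> (forall i, is_laurent P`_i) ->
  (forall j, Q`_j = P`_j \/ Q`_j = - P`_j) -> expansive_poly P -> expansive_poly Q.
Proof.
move=> P_monic Q_monic P_size PQ_size P_laurent QP.
have Q_laurent j : is_laurent Q`_j by case: (QP j) => ->; [|apply: laurentN].
have lcoefQ j t : (lcoef Q`_j t != 0) = (lcoef P`_j t != 0).
  by case: (QP j) => ->; rewrite ?lcoefN ?oppr_eq0.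
have [Q0 degpQ0 degmQ0] : [/\ (Q`_0 != 0) = (P`_0 != 0),
    degp Q`_0 = degp P`_0 & degm Q`_0 = degm P`_0].
  by case: (QP 0%N) => ->; rewrite ?oppr_eq0 ?degpN ?degmN.
move/(expansive_polyP P_monic P_laurent P_size) => -[P0 inside].
apply/(expansive_polyP Q_monic Q_laurent); first by rewrite -PQ_size.
rewrite Q0 degpQ0 degmQ0 -PQ_size; split=> // i t i_d.
by rewrite lcoefQ; apply: inside.
Qed.

End ExpansivePoly.

Section CompanionPolynomial.
Variables (R : comNzRingType) (N : nat) (alpha : 'I_N -> R).

Definition alpha_poly : {poly R} := \sum_(i < N) (alpha i)%:P * 'X^i.

Definition char_alpha : {poly R} := 'X^N - alpha_poly.

Lemma size_alpha_poly : (size alpha_poly <= N)%N.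
Proof.
apply: leq_trans (size_sum _ _ _) _; apply/bigmax_leqP => i _.
by rewrite mul_polyC (leq_trans (size_scale_leq _ _)) // size_polyXn.
Qed.

Lemma coef_alpha_poly (i : 'I_N) : alpha_poly`_i = alpha i.
Proof.
rewrite coef_sum (bigD1 i) //= coefCM coefXn eqxx mulr1 big1 ?addr0 // => j ji.
by move: ji; rewrite coefCM coefXn -val_eqE eq_sym => /negbTE->; rewrite mulr0.
Qed.

Lemma coef_alpha_poly_ge j : (N <= j)%N -> alpha_poly`_j = 0.
Proof. by move=> N_j; rewrite nth_default // (leq_trans size_alpha_poly). Qed.

Lemma size_char_alpha : size char_alpha = N.+1.
Proof. by rewrite size_polyDl ?size_polyXn // size_polyN ltnS size_alpha_poly. Qed.

Lemma char_alpha_monic : char_alpha \is monic.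
Proof.
rewrite monicE lead_coefDl ?lead_coefXn //.
by rewrite size_polyN size_polyXn ltnS size_alpha_poly.
Qed.

Lemma coef_char_alpha (i : 'I_N) : char_alpha`_i = - alpha i.
Proof. by rewrite coefB coefXn coef_alpha_poly (ltn_eqF (ltn_ord i)) sub0r. Qed.

Lemma coef_char_alpha_N : char_alpha`_N = 1.
Proof. by rewrite coefB coefXn eqxx coef_alpha_poly_ge // subr0. Qed.

Lemma size_alpha_polyDXn : size (alpha_poly + 'X^N) = N.+1.
Proof. by rewrite addrC size_polyDl ?size_polyXn // ltnS size_alpha_poly. Qed.

Lemma alpha_polyDXn_monic : alpha_poly + 'X^N \is monic.
Proof.
by rewrite monicE addrC lead_coefDl ?lead_coefXn // size_polyXn ltnS size_alpha_poly.
Qed.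

Lemma coef_alpha_polyDXn j :
  (alpha_poly + 'X^N)`_j = char_alpha`_j \/ (alpha_poly + 'X^N)`_j = - char_alpha`_j.
Proof.
rewrite coefD coefB coefXn; have [->|_] := eqVneq j N.
  by left; rewrite coef_alpha_poly_ge // add0r subr0.
by right; rewrite addr0 sub0r opprK.
Qed.

End CompanionPolynomial.

Lemma char_poly_trmx (R : comNzRingType) m (A : 'M[R]_m) : char_poly A^T = char_poly A.
Proof.
rewrite /char_poly -det_tr; congr (\det _); apply/matrixP => i j.
by rewrite !mxE eq_sym.
Qed.

Lemma char_poly_castmx (R : comNzRingType) m m' (e : m = m') (A : 'M[R]_m) :
  char_poly (castmx (e, e) A) = char_poly A.
Proof. by case: m' / e; rewrite castmx_id. Qed.

Lemma char_poly_matA p N (alpha : 'I_N -> K p) : char_poly (matA alpha) = char_alpha alpha.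
Proof.
have e : (size (char_alpha alpha)).-1 = N by rewrite size_char_alpha.
rewrite -[RHS](companionmxK (char_alpha_monic alpha)) -(char_poly_castmx e).
congr char_poly; apply/matrixP => i j; rewrite castmxE !mxE /=.
rewrite size_char_alpha /= coef_char_alpha opprK.
have i_N := ltn_ord i; case: (ltnP i.+1 N) => [i_lt|i_ge].
  rewrite (_ : (i == N.-1 :> nat) = false) 1?eq_sym //; apply/negP => /eqP; lia.
by rewrite (_ : (i == N.-1 :> nat) = true) //; apply/eqP; lia.
Qed.

Section Distance.
Local Notation RR := Rdefinitions.R.

Lemma exp2_gt0 (k : nat) : (0 : RR) < 2%:R ^+ k.
Proof. by rewrite exprn_gt0 // ltr0n. Qed.

Lemma exp2V_le (k m : nat) : (k <= m)%N -> (2%:R : RR) ^- m <= 2%:R ^- k.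
Proof. by move=> km; rewrite lef_pV2 ?posrE ?exp2_gt0 // ler_eXn2l // ltr1n. Qed.

Lemma exists_exp2V_lt (eps : RR) : 0 < eps -> exists m : nat, (2%:R : RR) ^- m < eps.
Proof.
move=> eps_gt0; exists (Num.Def.archi_bound eps^-1).
have := @upper_nthrootP _ eps^-1 _ (leqnn _).
by rewrite invf_plt ?posrE ?exp2_gt0.
Qed.

Variables (p n : nat).
Implicit Types c : config p n.

Lemma cdist_ge c c' (m : nat) :
  (exists j : int, (absz j <= m)%N /\ c j <> c' j) -> (2%:R : RR) ^- m <= cdist c c'.
Proof.
move=> [j [j_m cc']]; rewrite /cdist; case: pselect => [h|[]]; last first.
  by exists (absz j); apply/asboolP; exists j.
case: ex_minnP => k _ k_min; apply/exp2V_le/(leq_trans _ j_m)/k_min.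
by apply/asboolP; exists j.
Qed.

Lemma cdist_le c c' (m : nat) :
  (forall j : int, (absz j <= m)%N -> c j = c' j) -> cdist c c' <= (2%:R : RR) ^- m.+1.
Proof.
move=> cc'; rewrite /cdist; case: pselect => [h|_]; last by rewrite invr_ge0 ltW ?exp2_gt0.
case: ex_minnP => k /asboolP[j [<- c_j]] _; apply: exp2V_le.
by rewrite ltnNge; apply: contra_notN c_j => /cc'.
Qed.

End Distance.

Lemma lca_row p N (M : 'M[K p]_N) (c : config p N) y a :
  lca M c y a 0 = \sum_(b < N) conv (radius M) (lcoef (M a b)) (fun z => c z b 0) y.
Proof.
rewrite /lca summxE; under eq_bigr => k _ do rewrite mxE.
by rewrite exchange_big; apply: eq_bigr => b _; apply: eq_bigr => k _; rewrite mxE.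
Qed.

Lemma lcoef_le_radius p N (M : 'M[K p]_N) a b t :
  lcoef (M a b) t != 0 -> (absz t <= radius M)%N.
Proof.
move/lcoef_window/leq_trans; apply.
apply: leq_trans (leq_bigmax a).
exact: (@leq_bigmax _ (fun b => maxn (lrep (M a b)).1 (size (lrep (M a b)).2)) b).
Qed.

Section CompanionLCA.
Variables (p n : nat) (alpha : 'I_n.+1 -> K p).
Hypothesis alpha_laurent : forall i, is_laurent (alpha i).
Local Notation N := n.+1.
Local Notation F := (lca (matA alpha)).
Local Notation r := (radius (matA alpha)).
Local Notation P := (char_alpha alpha).

Definition beta_alpha (i : nat) (t : int) : 'F_p := lcoef (char_alpha alpha)`_i t.
Local Notation beta := beta_alpha.

Lemma lca_matA_shift (c : config p N) y (a : nat) : (a < n)%N ->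
  F c y (inord a) 0 = c y (inord a.+1) 0.
Proof.
move=> a_n; rewrite lca_row (bigD1 (inord a.+1)) //= big1 => [|b b_a].
  rewrite (@eq_conv_l _ _ _ (fun t => (t == 0)%:R)) ?conv_delta ?addr0 // => t.
  by rewrite mxE !inordK ?ifT ?eqxx ?lcoef1 //; lia.
rewrite (@eq_conv_l _ _ _ (fun=> 0)) ?conv0l // => t.
rewrite mxE inordK ?ifT; [|lia|lia].
rewrite (_ : (b == a.+1 :> nat) = false) ?lcoef0 //; apply/negbTE.
by apply: contra b_a => /eqP b_a; apply/eqP/val_inj; rewrite /= inordK //; lia.
Qed.

Lemma lca_matA_last (c : config p N) y :
  F c y ord_max 0 = \sum_(b < N) conv r (lcoef (alpha b)) (fun z => c z b 0) y.
Proof.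
by rewrite lca_row; apply: eq_bigr => b _; apply: eq_conv_l => t; rewrite mxE /= ltnn.
Qed.

Definition orbit0 (c : config p N) (j : nat) (y : int) : 'F_p := iter j F c y ord0 0.

Lemma iter_lca_coord (c : config p N) y (b : nat) l : (b < N)%N ->
  iter l F c y (inord b) 0 = orbit0 c (l + b) y.
Proof.
elim: b l => [|b IHb] l b_N.
  by rewrite addn0 (_ : inord 0 = ord0) //; apply: val_inj; rewrite /= inordK.
by rewrite -lca_matA_shift // -iterS IHb ?addSnnS //; lia.
Qed.

Lemma rec_lhs_beta_alpha u l y :
  rec_lhs N r beta_alpha u l y =
  u (l + N)%N y - \sum_(b < N) conv r (lcoef (alpha b)) (u (l + b)%N) y.
Proof.
rewrite /rec_lhs big_ord_recr /= addrC; congr (_ + _).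
  rewrite (@eq_conv_l _ _ _ (fun t => (t == 0)%:R)) ?conv_delta // => t.
  by rewrite /beta_alpha coef_char_alpha_N lcoef1.
rewrite -sumrN; apply: eq_bigr => b _; rewrite -convNl; apply: eq_conv_l => t.
by rewrite /beta_alpha coef_char_alpha lcoefN.
Qed.

Lemma solves_beta_alphaP u : solves N r beta_alpha u <->
  forall l y, u (l + N)%N y = \sum_(b < N) conv r (lcoef (alpha b)) (u (l + b)%N) y.
Proof.
split=> su l y; last by rewrite rec_lhs_beta_alpha su subrr.
by apply/eqP; rewrite -subr_eq0 -rec_lhs_beta_alpha su.
Qed.

Lemma orbit0_solves (c : config p N) : solves N r beta_alpha (orbit0 c).
Proof.
apply/solves_beta_alphaP => l y; rewrite -[(l + N)%N]addSnnS -iter_lca_coord //.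
rewrite (_ : inord n = ord_max); last by apply: val_inj; rewrite /= inordK.
rewrite iterS lca_matA_last; apply: eq_bigr => b _; apply: eq_conv => t _ _.
by rewrite -iter_lca_coord // inord_val.
Qed.

Definition config_of (w : nat -> int -> 'F_p) : config p N := fun y => \col_b w b y.

Lemma iter_config_of w : solves N r beta_alpha w ->
  forall l y (b : 'I_N), iter l F (config_of w) y b 0 = w (l + b)%N y.
Proof.
move/solves_beta_alphaP => sw; elim=> [|l IHl] y b; first by rewrite mxE.
rewrite iterS; have [b_n|b_n] := ltnP b n.
  by rewrite -[b]inord_val lca_matA_shift // IHl !inordK ?addnS //; lia.
rewrite (_ : b = ord_max); last by apply: val_inj; have := ltn_ord b; rewrite /=; lia.
rewrite lca_matA_last /= addSnnS sw; apply: eq_bigr => b' _.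
by apply: eq_conv => t _ _; rewrite IHl.
Qed.

Lemma config_eq_orbit0 (c c' : config p N) :
  (forall j y, orbit0 c j y = orbit0 c' j y) -> c = c'.
Proof.
move=> cc'; apply: funext => y; apply/matrixP => b k; rewrite (ord1 k) -[b]inord_val.
by rewrite -[c]/(iter 0 F c) -[c']/(iter 0 F c') !iter_lca_coord.
Qed.



Lemma char_alpha_laurent j : is_laurent P`_j.
Proof.
have [j_lt|j_ge] := ltnP j N.
  by rewrite -[j]/(nat_of_ord (Ordinal j_lt)) coef_char_alpha; apply: laurentN.
have [->|j_N] := eqVneq j N; first by rewrite coef_char_alpha_N; apply: laurent1.
by rewrite nth_default ?size_char_alpha; [apply: laurent0 | lia].
Qed.

Lemma beta_alpha_N t : beta N t = (t == 0)%:R.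
Proof. by rewrite /beta_alpha coef_char_alpha_N lcoef1. Qed.

Lemma beta_alpha_supported : supported N r beta.
Proof.
move=> i t; rewrite leq_eqVlt => /orP[/eqP->|i_lt].
  by rewrite beta_alpha_N; have [->|t_nz] := eqVneq t 0.
rewrite /beta_alpha -[i]/(nat_of_ord (Ordinal i_lt)) coef_char_alpha lcoefN // oppr_eq0.
rewrite (_ : alpha _ = matA alpha ord_max (Ordinal i_lt)); first exact: lcoef_le_radius.
by rewrite mxE /= ltnn.
Qed.

Lemma not_pos_expansive_of_solutions :
  (forall m : nat, exists w, [/\ solves N r beta w, (exists y0, w 0%N y0 != 0) &
     forall l y, (absz y <= m)%N -> w l y = 0]) ->
  ~ pos_expansive F.
Proof.
move=> sols [eps [eps_gt0 expF]]; have [m m_eps] := exists_exp2V_lt eps_gt0.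
have [w [sw [y0 w0y0] w_win]] := sols m.
have s0 : solves N r beta (fun _ _ => 0) by move=> l y; apply: rec_lhs0.
have w_nz : config_of w <> config_of (fun _ _ => 0).
  by move/(congr1 (fun c : config p N => c y0 ord0 0)); rewrite !mxE; apply/eqP.
have [l] := expF _ _ w_nz; apply/negP; rewrite -ltNge.
apply: le_lt_trans (le_lt_trans (exp2V_le (leqnSn m)) m_eps); apply: cdist_le => j j_m.
by apply/matrixP => b k; rewrite (ord1 k) !iter_config_of // w_win.
Qed.

Lemma pos_expansive_low i t0 : pos_expansive F -> (0 < i <= N)%N -> beta i t0 != 0 ->
  exists2 t, t < t0 & beta 0 t != 0.
Proof.
move=> posF i_N bit0; case: (pselect (exists2 t, t < t0 & beta 0 t != 0)) => // no_t.
have b0_low t : t < t0 -> beta 0 t = 0.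
  by move=> t_t0; apply/eqP; apply: contra_notT no_t => ?; exists t.
have [u [u00 u_neg su]] := exists_solution_nonneg beta_alpha_supported i_N bit0 b0_low.
exfalso; apply: (not_pos_expansive_of_solutions _ posF) => m.
exists (fun l y => u l (y - (m.+1)%:Z)); split.
- exact: solves_shift.
- by exists (m.+1)%:Z; rewrite subrr u00 oner_neq0.
- by move=> l y y_m; apply: u_neg; lia.
Qed.

Lemma pos_expansive_high i t0 : pos_expansive F -> (0 < i <= N)%N -> beta i t0 != 0 ->
  exists2 t, t0 < t & beta 0 t != 0.
Proof.
move=> posF i_N bit0; case: (pselect (exists2 t, t0 < t & beta 0 t != 0)) => // no_t.
pose beta' j t := beta j (- t).
have supp' : supported N r beta' by move=> j t j_N /(beta_alpha_supported j_N); lia.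
have bi' : beta' i (- t0) != 0 by rewrite /beta' opprK.
have b0' t : t < - t0 -> beta' 0 t = 0.
  by move=> t_t0; apply/eqP; apply: contra_notT no_t => ?; exists (- t); [lia|].
have [u [u00 u_neg su]] := exists_solution_nonneg supp' i_N bi' b0'.
exfalso; apply: (not_pos_expansive_of_solutions _ posF) => m.
exists (fun l y => u l (- y - (m.+1)%:Z)); split.
- rewrite [X in solves _ _ X](_ : _ = fun j t => beta' j (- t)).
    exact: solves_refl (solves_shift _ su).
  by apply/funext => j; apply/funext => t; rewrite /beta' opprK.
- by exists (- (m.+1)%:Z); rewrite opprK subrr u00 oner_neq0.
- by move=> l y y_m; apply: u_neg; lia.
Qed.

Lemma pos_expansive_expansive : pos_expansive F -> expansive_poly P.
Proof.
move=> posF; apply/expansive_polyP; first exact: char_alpha_monic.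
- exact: char_alpha_laurent.
- by rewrite size_char_alpha.
have bN0 : beta N 0 != 0 by rewrite beta_alpha_N eqxx oner_neq0.
have N_pos : (0 < N <= N)%N by rewrite leqnn.
split=> [|i t]; first apply/negP => /eqP P0.
  by have [t _] := pos_expansive_low posF N_pos bN0; rewrite /beta_alpha P0 lcoef0 eqxx.
rewrite size_char_alpha /= => i_N bit; apply/andP; split; rewrite ltNge; apply/negP => t_deg.
  have [s s_t] := pos_expansive_low posF i_N bit; apply/negP; rewrite negbK.
  by apply/eqP/lcoef_lt_degm; apply: lt_le_trans s_t t_deg.
have [s t_s] := pos_expansive_high posF i_N bit; apply/negP; rewrite negbK.
by apply/eqP/lcoef_gt_degp; apply: le_lt_trans t_deg t_s.
Qed.

Lemma expansive_pos_expansive : expansive_poly P -> pos_expansive F.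
Proof.
have P_size : (1 < size P)%N by rewrite size_char_alpha.
case/(expansive_polyP (char_alpha_monic alpha) char_alpha_laurent P_size) => P0.
rewrite size_char_alpha /= => inside.
have lP0 := char_alpha_laurent 0.
have beta_e := lcoef_degm lP0 P0; have beta_d := lcoef_degp lP0 P0.
have beta_ed i t : (i <= N)%N -> beta i t != 0 ->
    [|| (i == 0%N) && (t == degm P`_0) | degm P`_0 < t] &&
    [|| (i == 0%N) && (t == degp P`_0) | t < degp P`_0].
  case: i => [_ bt|i i_N bit]; last first.
    by have /andP[-> ->] := inside i.+1 t i_N bit; rewrite !orbT.
  have := degm_le bt; have := degp_ge bt; rewrite !le_eqVlt eq_sym.
  by case/orP=> [->|->] /orP[/eqP->|->]; rewrite ?eqxx ?orbT.
exists (2%:R ^- r); split=> [|c c' cc']; first by rewrite invr_gt0 exp2_gt0.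
case: (pselect (exists l, 2%:R ^- r <= cdist (iter l F c) (iter l F c'))) => // near.
exfalso; apply: cc'; apply: config_eq_orbit0 => j y; apply/eqP; rewrite -subr_eq0; apply/eqP.
have su := solvesB (orbit0_solves c) (orbit0_solves c').
apply: (solves_eq0 beta_alpha_supported (leqnn r) beta_e beta_d beta_ed su) => l z z_r.
case: (pselect (iter l F c z = iter l F c' z)) => [eq_z|neq_z]; first by rewrite /orbit0 eq_z subrr.
by case: near; exists l; apply: cdist_ge; exists z.
Qed.

Lemma expansive_alpha_polyDXn : expansive_poly (alpha_poly alpha + 'X^N) <-> expansive_poly P.
Proof.
have [Q_size P_size] := (size_alpha_polyDXn alpha, size_char_alpha alpha).
have QP := coef_alpha_polyDXn alpha.
split; apply: expansive_poly_sign.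
- exact: alpha_polyDXn_monic.
- exact: char_alpha_monic.
- by rewrite Q_size.
- by rewrite Q_size P_size.
- by move=> j; case: (QP j) => ->; [|apply: laurentN]; apply: char_alpha_laurent.
- by move=> j; case: (QP j) => ->; [left | right; rewrite opprK].
- exact: char_alpha_monic.
- exact: alpha_polyDXn_monic.
- by rewrite P_size.
- by rewrite Q_size P_size.
- exact: char_alpha_laurent.
- exact: QP.
Qed.

End CompanionLCA.

Theorem lemma10 (p n : nat) (hp : prime p) (hn : (1 < n)%N)
    (alpha : 'I_n -> K p) (halpha : forall i, is_laurent (alpha i)) :
  [<-> pos_expansive (lca (matA alpha));
       expansive_mx (matA alpha);
       expansive_mx (matA alpha)^T;
       expansive_poly (\sum_(i < n) (alpha i)%:P * 'X^i + 'X^n)].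
Proof.
case: n hn alpha halpha => [//|n] _ alpha halpha.
have e_pos : pos_expansive (lca (matA alpha)) <-> expansive_poly (char_alpha alpha).
  exact: conj (pos_expansive_expansive halpha) (expansive_pos_expansive halpha).
have e_mx : expansive_mx (matA alpha) <-> expansive_poly (char_alpha alpha).
  by rewrite /expansive_mx char_poly_matA.
have e_tr : expansive_mx (matA alpha)^T <-> expansive_poly (char_alpha alpha).
  by rewrite /expansive_mx char_poly_trmx char_poly_matA.
have e_poly := expansive_alpha_polyDXn halpha.
by tfae=> [/e_pos/e_mx | /e_mx/e_tr | /e_tr/e_poly | /e_poly/e_pos].
Qed.
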